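(* Let $\mathcal{F}\subset K[x_1,\ldots,x_n]$ be a chordal polynomial set with $x_1<\cdots<x_n$ as a perfect elimination ordering. Then every node $(\mathcal{P},\mathcal{Q},i)$ of the Wang decomposition tree $\mathcal{N}(\mathcal{F})$ satisfies $G(\mathcal{P})\subseteq G(\mathcal{F})$.
   Context: Let $K$ be a field and $K[x_1,\ldots,x_n]$ the polynomial ring, with the variables ordered $x_1<\cdots<x_n$. For a polynomial $F$, $\mathrm{supp}(F)$ is the set of variables effectively appearing in $F$. For a set of polynomials $\mathcal{P}$, $\mathrm{supp}(\mathcal{P})=\bigcup_{F\in\mathcal{P}}\mathrm{supp}(F)$. For a nonconstant $F$, $\mathrm{lv}(F)$ is the greatest variable in $\mathrm{supp}(F)$. For a polynomial set $\mathcal{P}$ and $1\le i\le n$, $\mathcal{P}^{(i)}=\{P\in\mathcal{P}:\mathrm{lv}(P)=x_i\}$; constants belong to no $\mathcal{P}^{(i)}$. The associated graph $G(\mathcal{P})$ is the undirected graph whose vertex set is $\mathrm{supp}(\mathcal{P})$, with an edge between distinct $x_i,x_j$ iff some $F\in\mathcal{P}$ has $x_i,x_j\in\mathrm{supp}(F)$. For graphs, $G\subseteq G'$ means that $G$ is a subgraph of $G'$, i.e. both the vertex set and the edge set are contained. An ordering of the vertices of a graph is a perfect elimination ordering if, for every vertex $v$, the set consisting of $v$ and all neighbours of $v$ smaller than $v$ is a clique. A polynomial set $\mathcal{P}$ is called chordal with $x_1<\cdots<x_n$ as a perfect elimination ordering if the restriction of this ordering to $\mathrm{supp}(\mathcal{P})$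 is a perfect elimination ordering of $G(\mathcal{P})$. For a nonconstant polynomial $F$ with $\mathrm{lv}(F)=x_k$, write $F=I x_k^d+R$ with $d=\deg(F,x_k)$, $I\in K[x_1,\ldots,x_{k-1}]$, and $\deg(R,x_k)<d$. Then $\mathrm{ini}(F)=I$ is the initial of $F$ and $\mathrm{tail}(F)=R$ is the tail of $F$. For $\mathrm{lv}(T)=x_i$, $\mathrm{prem}(P,T)$ is the pseudo-remainder of $P$ by $T$ with respect to $x_i$. The zero polynomial has empty support. Wang's decomposition tree: $\mathcal{N}(\mathcal{F})$ is the smallest set of triples $(\mathcal{P},\mathcal{Q},i)$, where $\mathcal{P},\mathcal{Q}$ are polynomial sets and $0\le i\le n$, satisfying the following: - $(\mathcal{F},\emptyset,n)\in\mathcal{N}(\mathcal{F})$. - If $(\mathcal{P},\mathcal{Q},i)\in\mathcal{N}(\mathcal{F})$ with $i\ge1$ and $\#\mathcal{P}^{(i)}>1$, then for every $T\in\mathcal{P}^{(i)}$ of minimal degree in $x_i$ among the elements of $\mathcal{P}^{(i)}$, both of the following triples belong to $\mathcal{N}(\mathcal{F})$: - the left child $\big((\mathcal{P}\setminus\mathcal{P}^{(i)})\cup\{T\}\cup\{\mathrm{prem}(P,T):P\in\mathcal{P}^{(i)}\},\ \mathcal{Q}\cup\{\mathrm{ini}(T)\},\ i\big)$; - the right child $\big((\mathcal{P}\setminus\{T\})\cup\{\mathrm{ini}(T),\mathrm{tail}(T)\},\ \mathcal{Q},\ i\big)$. - If $(\mathcal{P},\mathcal{Q},i)\in\mathcal{N}(\mathcal{F})$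 with $i\ge1$ and $\#\mathcal{P}^{(i)}\le1$, then $(\mathcal{P},\mathcal{Q},i-1)\in\mathcal{N}(\mathcal{F})$. This set contains all triples occurring in Wang's method for triangular decomposition applied to $\mathcal{F}$. *)

(* Multivariate polynomials K[x_1,...,x_n] are modelled as
   iterated univariate polynomials: MP K 0 = K and MP K (n+1) = (MP K n)[x_{n+1}],
   so that x_{n+1} is the outermost variable. Variables are indexed by
   naturals 1..n (x_i <-> index i). *)
From HB Require Import structures.
From mathcomp Require Import all_boot all_order all_algebra.
Set Implicit Arguments. Unset Strict Implicit. Unset Printing Implicit Defensive.
Import GRing.Theory.
Local Open Scope ring_scope.

Fixpoint MP (K : idomainType) (n : nat) : idomainType :=
  match n with
  | 0 => K
  | n'.+1 => ({poly MP K n'} : idomainType)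
  end.

(* degree of P in the variable x_i (0 if x_i does not occur, or P = 0) *)
Fixpoint deg_in (K : idomainType) (n : nat) : nat -> MP K n -> nat :=
  match n return nat -> MP K n -> nat with
  | 0 => fun _ _ => 0%N
  | n'.+1 => fun i (P : {poly MP K n'}) =>
      if i == n'.+1 then (size P).-1
      else (\max_(j < size P) deg_in i P`_j)%N
  end.

(* coefficient of x_i^e in P, P viewed as a polynomial in x_i whose
   coefficients are polynomials in the other variables *)
Fixpoint coef_at (K : idomainType) (n : nat) : nat -> nat -> MP K n -> MP K n :=
  match n return nat -> nat -> MP K n -> MP K n with
  | 0 => fun _ e P => if e == 0%N then P else 0
  | n'.+1 => fun i e (P : {poly MP K n'}) =>
      if i == n'.+1 then (P`_e)%:P
      else map_poly (coef_at i e) P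
  end.

(* the variable x_i (meaningful for 1 <= i <= n) *)
Fixpoint var (K : idomainType) (n : nat) : nat -> MP K n :=
  match n return nat -> MP K n with
  | 0 => fun _ => 1
  | n'.+1 => fun i => if i == n'.+1 then ('X : {poly MP K n'}) else (var K n' i)%:P
  end.

Section Ops.
Variables (K : idomainType) (n : nat).
Implicit Types (P T F : MP K n).

Definition occurs (i : nat) P : bool := (0 < deg_in i P)%N.

(* leading variable: index of the greatest variable in supp(P); 0 iff P constant *)
Definition lv P : nat := (\max_(i < n.+1 | occurs i P) i)%N.

Definition ini F : MP K n := coef_at (lv F) (deg_in (lv F) F) F.
Definition tail F : MP K n := F - ini F * var K n (lv F) ^+ deg_in (lv F) F.

(* pseudo-remainder of P by T w.r.t. x_i, i = lv T (Knuth's algorithm with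
   exactly s = max(deg(P,x_i) - deg(T,x_i) + 1, 0) multiplications by ini T) *)
Fixpoint prem_aux (T : MP K n) (i d j : nat) (r : MP K n) : MP K n :=
  match j with
  | 0 => r
  | j'.+1 => prem_aux T i d j'
               (ini T * r - coef_at i (d + j') r * var K n i ^+ j' * T)
  end.

Definition prem P T : MP K n :=
  let i := lv T in let d := deg_in i T in
  if (deg_in i P < d)%N then P else prem_aux T i d (deg_in i P - d).+1 P.

Definition pset := MP K n -> Prop.

Definition gvert (S : pset) (v : nat) : Prop := exists F, S F /\ occurs v F.
Definition gadj (S : pset) (u v : nat) : Prop :=
  u <> v /\ exists F, S F /\ occurs u F /\ occurs v F.

Definition subgraph (S1 S2 : pset) : Prop :=
  (forall v, gvert S1 v -> gvert S2 v) /\ (forall u v, gadj S1 u v -> gadj S2 u v).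

(* x_1 < ... < x_n (restricted to supp S) is a perfect elimination ordering of G(S) *)
Definition chordal_peo (S : pset) : Prop :=
  forall v, gvert S v ->
    forall u w, (u = v \/ (gadj S u v /\ (u < v)%N)) ->
                (w = v \/ (gadj S w v /\ (w < v)%N)) -> u <> w -> gadj S u w.

Definition pset_finite (S : pset) : Prop := exists s : seq (MP K n), forall p, S p <-> p \in s.

Definition level (S : pset) (i : nat) : pset := fun p => S p /\ lv p = i.

Definition card_gt1 (S : pset) : Prop := exists p q, S p /\ S q /\ p <> q.

Definition left_set (S : pset) (i : nat) (T : MP K n) : pset :=
  fun p => (S p /\ lv p <> i) \/ p = T \/ exists p', level S i p' /\ p = prem p' T.
Definition right_set (S : pset) (T : MP K n) : pset :=
  fun p => (S p /\ p <> T) \/ p = ini T \/ p = tail T.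

Inductive wang_node (F : pset) : pset -> pset -> nat -> Prop :=
| WRoot : wang_node F F (fun _ => False) n
| WLeft (P Q : pset) (i : nat) (T : MP K n) :
    wang_node F P Q i -> (1 <= i)%N -> card_gt1 (level P i) -> level P i T ->
    (forall p, level P i p -> (deg_in i T <= deg_in i p)%N) ->
    wang_node F (left_set P i T) (fun q => Q q \/ q = ini T) i
| WRight (P Q : pset) (i : nat) (T : MP K n) :
    wang_node F P Q i -> (1 <= i)%N -> card_gt1 (level P i) -> level P i T ->
    (forall p, level P i p -> (deg_in i T <= deg_in i p)%N) ->
    wang_node F (right_set P T) Q i
| WDown (P Q : pset) (i : nat) :
    wang_node F P Q i.+1 -> ~ card_gt1 (level P i.+1) -> wang_node F P Q i.
End Ops.

(* Along the tree supports can only shrink: ini T, tail T and prem P T involve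
   only variables of P or T, because the polynomials free of a given variable
   form a subring stable under taking coefficients.  Hence a right child creates
   no new vertex or edge.  In a left child, every variable of a pseudo-remainder
   by T with lv T = x_i occurs in some polynomial with leading variable x_i, so,
   as G(P) is already a subgraph of G(F), it is x_i itself or a smaller
   neighbour of x_i in G(F); the perfect elimination ordering makes these
   variables a clique of G(F). *)

From HB Require Import structures.
From mathcomp Require Import all_boot all_order all_algebra.
Set Implicit Arguments. Unset Strict Implicit. Unset Printing Implicit Defensive.
Import GRing.Theory.
Local Open Scope ring_scope.

Section FreeOf.
Variable K : idomainType.

Definition free_of n i : {pred MP K n} := [pred p | deg_in i p == 0%N].

Lemma deg_in0 n i : deg_in i (0 : MP K n) = 0%N.
Proof. by case: n => [|n] //=; case: ifP; rewrite polyseq0 ?big_ord0. Qed.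

Lemma coef_at0 n j e : coef_at j e (0 : MP K n) = 0.
Proof. by case: n => [|n] /=; [case: eqP | case: ifP; rewrite ?coef0 ?polyC0 ?map_poly0]. Qed.

Lemma free_of0 n i : 0 \in @free_of n i.
Proof. by rewrite inE /free_of deg_in0. Qed.

Lemma free_of_top n (p : MP K n.+1) : (p \in @free_of n.+1 n.+1) = (size p <= 1)%N.
Proof. by rewrite inE /free_of /= eqxx; case: (size _) => [|[]]. Qed.

Lemma free_of_coefs n i (p : MP K n.+1) : i != n.+1 ->
  reflect (forall k, p`_k \in @free_of n i) (p \in @free_of n.+1 i).
Proof.
rewrite inE /= => /negbTE ->; rewrite -leqn0; apply: (iffP (bigmax_leqP _ _ _)).
  move=> Hp k; case: (ltnP k (size p)) => Hk.
    by rewrite inE /= -leqn0 (Hp (Ordinal Hk)).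
  by rewrite nth_default ?free_of0.
by move=> Hp j _; rewrite leqn0; apply: Hp.
Qed.

Lemma free_of_subring_closed n i : subring_closed (@free_of n i).
Proof.
elim: n => [|n IH]; first by split.
have [-> | Hi] := eqVneq i n.+1.
  split=> [|p q|p q]; rewrite !free_of_top ?size_poly1 //.
  - by move=> Hp Hq; rewrite (leq_trans (size_polyD _ _)) // size_polyN geq_max Hp.
  - move=> Hp Hq; apply: leq_trans (size_polyMleq _ _) _.
    by case: (size p) (size q) Hp Hq => [|[|]] [|[|]].
case: IH => IH1 IHB IHM; have IH0 : 0 \in @free_of n i by rewrite -(subrr 1) IHB.
have coefsP p := @free_of_coefs n i p Hi.
split=> [|p q /coefsP Hp /coefsP Hq|p q /coefsP Hp /coefsP Hq]; apply/coefsP => k.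
- by rewrite coef1; case: (k == 0)%N.
- by rewrite coefB IHB.
- rewrite coefM; apply: (big_ind (fun x => x \in @free_of n i)) => //.
  + by move=> x y Hx Hy; rewrite -[y]opprK IHB // -sub0r IHB.
  + by move=> j _; rewrite IHM.
Qed.

HB.instance Definition _ n i := GRing.isSubringClosed.Build _ (@free_of n i)
  (free_of_subring_closed n i).

Lemma free_ofE n i (p : MP K n) : (p \in free_of i) = ~~ occurs i p.
Proof. by rewrite inE /occurs lt0n negbK. Qed.

Lemma occurs_range n j (p : MP K n) : occurs j p -> (0 < j <= n)%N.
Proof.
elim: n p => [|n IH] p; first by rewrite /occurs.
have [-> _ | Hj] := eqVneq j n.+1; first by rewrite leqnn.
apply: contraTT => Hrange; rewrite -free_ofE; apply/(free_of_coefs _ Hj) => k.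
by rewrite free_ofE; apply: contra Hrange => /IH /andP[-> /leqW].
Qed.

Lemma free_of_var n i j : i != j -> var K n j \in free_of i.
Proof.
move=> Hij; elim: n => [|n IH]; first by rewrite rpred1.
have [Ei | Hi] := eqVneq i n.+1.
  rewrite Ei free_of_top /=; case: ifP => [/eqP Ej|_]; first by rewrite Ei Ej eqxx in Hij.
  by rewrite size_polyC leq_b1.
apply/(free_of_coefs _ Hi) => k /=; case: ifP => _.
  by rewrite coefX; case: (k == 1)%N; rewrite ?rpred1 ?rpred0.
by rewrite coefC; case: (k == 0)%N; rewrite ?rpred0.
Qed.

Lemma free_of_coef_at n i j e (p : MP K n) : p \in free_of i -> coef_at j e p \in free_of i.
Proof.
elim: n p => [|n IH] p Hp; first by rewrite inE.
have [Ei | Hi] := eqVneq i n.+1.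
  move: Hp; rewrite Ei !free_of_top /=; case: ifP => _; first by rewrite size_polyC leq_b1.
  by rewrite /map_poly; apply: leq_trans (size_poly _ _).
move/(free_of_coefs _ Hi): Hp => Hp; apply/(free_of_coefs _ Hi) => k /=; case: ifP => _.
  by rewrite coefC; case: (k == 0)%N; rewrite ?rpred0.
by rewrite coef_map_id0 ?IH ?coef_at0.
Qed.
End FreeOf.

Section Support.
Variables (K : idomainType) (n : nat).
Implicit Types (p P T : MP K n).

Lemma occurs_leq_lv j p : occurs j p -> (j <= lv p)%N.
Proof.
move=> /[dup] Hj /occurs_range /andP[_ Hjn].
exact: leq_bigmax_cond (Ordinal (Hjn : j < n.+1)%N) Hj.
Qed.

Lemma lv_occurs p : (0 < lv p)%N -> occurs (lv p) p.
Proof.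
suff : (lv p == 0)%N || occurs (lv p) p by case/orP => [/eqP->|].
rewrite /lv; apply: (big_ind (fun x => (x == 0)%N || occurs x p)) => // [x y|k ->].
  by rewrite /maxn; case: ifP.
by rewrite orbT.
Qed.

Lemma occurs_ini j T : occurs j (ini T) -> occurs j T.
Proof. by apply: contraTT; rewrite -!free_ofE; apply: free_of_coef_at. Qed.

Lemma occurs_tail j T : occurs j (tail T) -> occurs j T.
Proof.
apply: contraTT; rewrite -!free_ofE => HT; rewrite rpredB // rpredM ?free_of_coef_at //.
have [Ej | Hj] := eqVneq j (lv T); last by rewrite rpredX ?free_of_var.
by move: HT; rewrite Ej inE => /eqP ->; rewrite expr0 rpred1.
Qed.

Lemma free_of_prem j P T :
  j != lv T -> P \in free_of j -> T \in free_of j -> prem P T \in free_of j.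
Proof.
move=> Hj HP HT; rewrite /prem; case: ifP => // _.
move: (_ - _)%N.+1 => m; elim: m P HP => // m IH r Hr /=; apply: IH.
by rewrite rpredB ?rpredM ?rpredX ?free_of_coef_at ?free_of_var.
Qed.

Lemma occurs_prem j P T : occurs j (prem P T) -> occurs j P \/ occurs j T.
Proof.
move=> Hj; have [Ej | Hlv] := eqVneq j (lv T).
  by right; rewrite Ej lv_occurs // -Ej; case/andP: (occurs_range Hj).
apply/orP; apply: contraLR Hj.
by rewrite negb_or -!free_ofE => /andP[HP HT]; apply: free_of_prem.
Qed.
End Support.

Section AssociatedGraph.
Variables (K : idomainType) (n : nat).
Implicit Types (S P F : pset K n).

Lemma subgraph_refl S : subgraph S S.
Proof. by []. Qed.

Lemma subgraph_trans S1 S2 S3 : subgraph S1 S2 -> subgraph S2 S3 -> subgraph S1 S3.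
Proof. by move=> [V12 E12] [V23 E23]; split=> [v /V12/V23 | u v /E12/E23]. Qed.

Lemma subgraph_supp_cover S1 S2 :
  (forall p, S1 p -> exists2 q, S2 q & forall w, occurs w p -> occurs w q) ->
  subgraph S1 S2.
Proof.
move=> cover.
split=> [v [p [/cover[q Sq pq] Hv]] | u v [Huv [p [/cover[q Sq pq] [Hu Hv]]]]].
  by exists q; split=> //; apply: pq.
by split=> //; exists q; split=> //; split; apply: pq.
Qed.

Lemma subgraph_right_set P T : P T -> subgraph (right_set P T) P.
Proof.
move=> PT; apply: subgraph_supp_cover => p [[Pp _] | [-> | ->]].
- by exists p.
- by exists T => // w /occurs_ini.
- by exists T => // w /occurs_tail.
Qed.

Lemma level_occurs_lower F P i q w : subgraph P F -> level P i q -> occurs w q ->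
  w = i \/ gadj F w i /\ (w < i)%N.
Proof.
move=> [_ PF] [Pq lvq] Hw; have [-> | Hwi] := eqVneq w i; [by left | right].
have ltwi : (w < i)%N by rewrite ltn_neqAle Hwi -lvq occurs_leq_lv.
split=> //; apply: PF; split; first exact/eqP.
by exists q; do !split=> //; rewrite -lvq lv_occurs // lvq (leq_ltn_trans _ ltwi).
Qed.

Lemma subgraph_left_set F P i T :
  chordal_peo F -> subgraph P F -> level P i T -> subgraph (left_set P i T) F.
Proof.
move=> Fch PF [PT lvT].
have prem_cover p' w :
    level P i p' -> occurs w (prem p' T) -> exists2 q, level P i q & occurs w q.
  by move=> Pp' /occurs_prem[]; [exists p' | exists T].
split=> [v [p [Hp Hv]] | u v [Huv [p [Hp [Hu Hv]]]]].
  apply: PF.1; case: Hp Hv => [[Pp _] | [-> | [p' [Pp' ->]] /(prem_cover _ _ Pp')[q [Pq _]]]];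
  by [exists p | exists T | exists q].
case: Hp Hu Hv => [[Pp _] | [-> | [p' [Pp' ->]]]] Hu Hv.
- by apply: PF.2; split=> //; exists p.
- by apply: PF.2; split=> //; exists T.
have lower w : occurs w (prem p' T) -> w = i \/ gadj F w i /\ (w < i)%N.
  by move=> /(prem_cover _ _ Pp')[q Pq]; apply: level_occurs_lower PF Pq.
have gvi : gvert F i.
  have [Eu | [[_ [q [Fq [_ Hiq]]]] _]] := lower u Hu; last by exists q.
  have [Ev | [[_ [q [Fq [_ Hiq]]]] _]] := lower v Hv; last by exists q.
  by case: Huv; rewrite Eu Ev.
exact: Fch gvi u v (lower u Hu) (lower v Hv) Huv.
Qed.
End AssociatedGraph.

Theorem theorem4p3 (K : fieldType) (n : nat) (F : pset K n)
  (Ffin : pset_finite F) (Fch : chordal_peo F) :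
  forall (P Q : pset K n) (i : nat), wang_node F P Q i -> subgraph P F.
Proof.
move=> P Q i; elim=> {P Q i} [| P Q i T _ PF _ _ PiT _ | P Q i T _ PF _ _ [PT _] _ | //].
- exact: subgraph_refl.
- exact: subgraph_left_set.
- exact: subgraph_trans (subgraph_right_set PT) PF.
Qed.
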